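(* Let $G$ and $H$ be finite simple graphs and $m,n$ positive integers. The direct product ${\sf M}_m(G)\times{\sf M}_n(H)$ is a cover graph if and only if $G$ or $H$ is bipartite.
   Context: A graph is a cover graph if it is the underlying (undirected) graph of the Hasse diagram of some finite partially ordered set. The direct product $G \times H$ has vertex set $V(G)\times V(H)$, with $(g_i,h_s)$ adjacent to $(g_j,h_t)$ if and only if $g_ig_j \in E(G)$ and $h_sh_t \in E(H)$. For a graph $G$ with vertex set $V_0=\{\langle 0,j\rangle : 0\le j\le N-1\}$ and edge set $E_0$, and $m>0$, the generalized Mycielskian ${\sf M}_m(G)$ has vertex set $V_0\cup V_1\cup\cdots\cup V_m\cup\{u\}$ where $V_i=\{\langle i,j\rangle: 0\le j\le N-1\}$, and edge set $E_0\cup E_1\cup\cdots\cup E_m\cup\{\langle m,j\rangle u: 0\le j\le N-1\}$, where $E_i=\{\langle i-1,j\rangle\langle i,k\rangle : \langle 0,j\rangle\langle 0,k\rangle\in E_0\}$ for $1\le i\le m$. *)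

From mathcomp Require Import all_boot.
Set Implicit Arguments. Unset Strict Implicit. Unset Printing Implicit Defensive.

(* A finite simple graph is a symmetric irreflexive relation [e : rel T] on a finType T. *)

Definition bipartite (T : finType) (e : rel T) : Prop :=
  exists c : T -> bool, forall x y, e x y -> c x != c y.

Definition covers (V : finType) (lt : rel V) (x y : V) : bool :=
  lt x y && [forall z, ~~ (lt x z && lt z y)].

Definition is_cover_graph (V : finType) (adj : rel V) : Prop :=
  exists lt : rel V,
    irreflexive lt /\ transitive lt /\
    forall x y, adj x y = covers lt x y || covers lt y x.

Definition direct_prod (V W : finType) (a : rel V) (b : rel W) : rel (V * W) :=
  fun p q => a p.1 q.1 && b p.2 q.2.

(* Generalized Mycielskian M_m(G): vertex <i,j> is [Some (i, j)] with
   i : 'I_(m.+1) (levels 0..m), j : T; the apex u is [None]. *)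
Definition mycielskian (T : finType) (e : rel T) (m : nat)
  : rel (option ('I_m.+1 * T)) :=
  fun x y =>
    match x, y with
    | Some (i, j), Some (i', k) =>
        e j k && [|| ((i == 0 :> nat) && (i' == 0 :> nat)),
                     (i.+1 == i' :> nat) | (i'.+1 == i :> nat)]
    | Some (i, _), None => i == m :> nat
    | None, Some (i, _) => i == m :> nat
    | None, None => false
    end.
Arguments mycielskian {T} e m.

(* If G is 2-coloured, colour every level of M_m(G) like G and the apex with a third
   colour: since m > 0 this is a proper 3-colouring of a triangle-free graph, and both
   properties pull back to the product along the first projection.  A triangle-free
   graph with a proper colouring by 0, 1, 2 is a cover graph: orient its edges upwards
   in colour, and also put x < z when col x = 0, col z = 2 and x, z have a common
   neighbour.

   Conversely, fix a cover order and count the up-steps of walks in its Hasse diagram.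
   On a 4-cycle both routes between opposite corners have the same number of up-steps,
   so changing a walk at isolated times keeps its count.  M_m(G) has a closed walk of
   odd length N through the apex that oscillates on an edge xy of G at level 0; pair it
   in the product with such a walk of M_n(H) on an edge x'y'.  Going around an odd
   cycle of G, moving alternately the tail and the head of the edge, turns xy into yx
   without changing the count; likewise in H.  This yields the reversed walk, whose
   up-steps are the down-steps of the original one, so N would be even. *)

From mathcomp Require Import all_boot zify.
From Stdlib Require Import Classical.
Set Implicit Arguments. Unset Strict Implicit. Unset Printing Implicit Defensive.

Definition triangle_free (V : finType) (adj : rel V) : Prop :=
  forall p q r, adj p q -> adj q r -> adj p r -> False.

Section ThreeColourable.
Variables (V : finType) (adj : rel V) (col : V -> nat).
Hypotheses (adj_sym : symmetric adj) (adj_tri : triangle_free adj).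
Hypotheses (col_proper : forall p q, adj p q -> col p != col q) (col_le2 : forall p, col p <= 2).

(* The 0-2 pairs joined by a path of length 2 are needed for transitivity. *)
Definition col_lt : rel V := fun p q =>
  (adj p q && (col p < col q)) ||
  [&& col p == 0, col q == 2 & [exists r, adj p r && adj r q]].

Lemma col_lt_col p q : col_lt p q -> col p < col q.
Proof. by case/orP=> [/andP[_ ->] // | /and3P[/eqP-> /eqP-> _]]. Qed.

Lemma col_lt_below2 p q : col p < col q -> col q < 2 -> col_lt p q = adj p q.
Proof.
move=> lt_pq lt_q2; have q_ne2 : col q == 2 = false by lia.
by rewrite /col_lt lt_pq andbT q_ne2 andbF orbF.
Qed.

Lemma col_lt_above0 p q : col p < col q -> 0 < col p -> col_lt p q = adj p q.
Proof. by move=> lt_pq gt_p0; rewrite /col_lt lt_pq andbT eqn0Ngt gt_p0 orbF. Qed.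

Lemma col_lt_irr : irreflexive col_lt.
Proof. by move=> p; apply/negbTE/negP => /col_lt_col; rewrite ltnn. Qed.

Lemma col_lt_trans : transitive col_lt.
Proof.
move=> q p r lt_pq lt_qr.
have c_pq := col_lt_col lt_pq; have c_qr := col_lt_col lt_qr; have c_r := col_le2 r.
have adj_pq : adj p q by rewrite -(col_lt_below2 c_pq) //; lia.
have adj_qr : adj q r by rewrite -(col_lt_above0 c_qr) //; lia.
apply/orP; right; apply/and3P; split; [apply/eqP; lia | apply/eqP; lia |].
by apply/existsP; exists q; rewrite adj_pq adj_qr.
Qed.

Lemma adj_covers p q : adj p q -> col p < col q -> covers col_lt p q.
Proof.
move=> adj_pq c_pq; apply/andP; split; first by rewrite /col_lt adj_pq c_pq.
apply/forallP=> z; apply/negP=> /andP[lt_pz lt_zq].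
have c_pz := col_lt_col lt_pz; have c_zq := col_lt_col lt_zq; have c_q := col_le2 q.
have adj_pz : adj p z by rewrite -(col_lt_below2 c_pz) //; lia.
have adj_zq : adj z q by rewrite -(col_lt_above0 c_zq) //; lia.
exact: adj_tri adj_pz adj_zq adj_pq.
Qed.

Lemma covers_adj p q : covers col_lt p q -> adj p q.
Proof.
case/andP=> /orP[/andP[] // | /and3P[/eqP c_p /eqP c_q /existsP[r /andP[adj_pr adj_rq]]]].
have c_r : col r = 1.
  by have := col_proper adj_pr; have := col_proper adj_rq; have := col_le2 r; lia.
move=> /forallP /(_ r).
by rewrite col_lt_below2 ?col_lt_above0 ?c_p ?c_q ?c_r ?adj_pr ?adj_rq.
Qed.

Lemma triangle_free_3colourable_cover_graph : is_cover_graph adj.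
Proof.
exists col_lt; split; [exact: col_lt_irr | split; first exact: col_lt_trans].
move=> p q; apply/idP/idP => [adj_pq | /orP[/covers_adj // | /covers_adj]]; last by rewrite adj_sym.
case: (ltngtP (col p) (col q)) (col_proper adj_pq) => // c_pq _.
- by rewrite adj_covers.
- by rewrite (@adj_covers q p) ?orbT // adj_sym.
Qed.

End ThreeColourable.

Lemma cover_graph_of_hom (V W : finType) (adj : rel V) (b : rel W) (f : V -> W) (col : W -> nat) :
  symmetric adj -> {homo f : p q / adj p q >-> b p q} ->
  triangle_free b -> (forall x y, b x y -> col x != col y) -> (forall x, col x <= 2) ->
  is_cover_graph adj.
Proof.
move=> adj_sym f_hom b_tri col_proper col_le2.
apply: (@triangle_free_3colourable_cover_graph _ _ (col \o f)) => // [p q r pq qr pr|p q pq|p].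
- exact: b_tri (f_hom _ _ pq) (f_hom _ _ qr) (f_hom _ _ pr).
- exact: col_proper (f_hom _ _ pq).
- exact: col_le2.
Qed.

Lemma direct_prod_sym (V W : finType) (a : rel V) (b : rel W) :
  symmetric a -> symmetric b -> symmetric (direct_prod a b).
Proof. by move=> a_sym b_sym p q; rewrite /direct_prod a_sym b_sym. Qed.

Section Mycielskian.
Variables (T : finType) (e : rel T) (m : nat).

Lemma mycielskian_sym : symmetric e -> symmetric (mycielskian e m).
Proof.
move=> e_sym [[i j]|] [[i' k]|] //=; rewrite e_sym; congr (_ && _).
by apply/idP/idP; case/or3P=> [/andP[-> ->]|->|->]; rewrite ?orbT.
Qed.

Definition mycielskian_col (c : T -> bool) (x : option ('I_m.+1 * T)) : nat :=
  if x is Some (_, j) then c j else 2.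

Variable c : T -> bool.
Hypothesis c_proper : forall x y, e x y -> c x != c y.

Lemma mycielskian_col_proper x y :
  mycielskian e m x y -> mycielskian_col c x != mycielskian_col c y.
Proof.
case: x y => [[i j]|] [[i' k]|] //= => [/andP[/c_proper]||];
  by case: (c _) => //; case: (c _).
Qed.

Lemma mycielskian_col_le2 x : mycielskian_col c x <= 2.
Proof. by case: x => [[i j]|] //=; case: (c j). Qed.

Lemma mycielskian_triangle_free : 0 < m -> triangle_free (mycielskian e m).
Proof.
move=> m_gt0 [[i j]|] [[i' k]|] [[i'' l]|] //=.
- move=> /andP[/c_proper jk _] /andP[/c_proper kl _] /andP[/c_proper jl _].
  by move: jk kl jl; case: (c j); case: (c k); case: (c l).
- by move=> /andP[_ lev] /eqP i'm /eqP im; move: lev; rewrite i'm im; lia.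
- by move=> /eqP im /eqP i'm /andP[_]; rewrite im i'm; lia.
- by move=> /eqP im /andP[_ lev] /eqP i''m; move: lev; rewrite im i''m; lia.
Qed.

End Mycielskian.

Lemma cover_graph_of_mycielskian_hom (V T : finType) (adj : rel V) (e : rel T) m
    (f : V -> option ('I_m.+1 * T)) :
  symmetric adj -> {homo f : p q / adj p q >-> mycielskian e m p q} ->
  0 < m -> bipartite e -> is_cover_graph adj.
Proof.
move=> adj_sym f_hom m_gt0 [c c_proper].
apply: (cover_graph_of_hom adj_sym f_hom (mycielskian_triangle_free c_proper m_gt0)).
- exact: mycielskian_col_proper c_proper.
- exact: mycielskian_col_le2.
Qed.

Lemma mycielskian_prod_cover_graph (T U : finType) (g : rel T) (h : rel U) (m n : nat) :
  symmetric g -> symmetric h -> 0 < m -> 0 < n -> bipartite g \/ bipartite h ->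
  is_cover_graph (direct_prod (mycielskian g m) (mycielskian h n)).
Proof.
move=> g_sym h_sym m_gt0 n_gt0 bip.
have prod_sym :=
  direct_prod_sym (mycielskian_sym (m := m) g_sym) (mycielskian_sym (m := n) h_sym).
case: bip => bip.
- by apply: (cover_graph_of_mycielskian_hom (f := fst) prod_sym) bip => // p q /andP[].
- by apply: (cover_graph_of_mycielskian_hom (f := snd) prod_sym) bip => // p q /andP[].
Qed.

Section CoverOrder.
Variables (V : finType) (lt : rel V).
Hypotheses (lt_irr : irreflexive lt) (lt_trans : transitive lt).

Definition hasse : rel V := fun p q => covers lt p q || covers lt q p.

Lemma hasse_sym : symmetric hasse.
Proof. by move=> p q; rewrite /hasse orbC. Qed.

Lemma covers_lt p q : covers lt p q -> lt p q.
Proof. by case/andP. Qed.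

Lemma covers_between p q z : covers lt p q -> lt p z -> lt z q -> False.
Proof. by case/andP=> _ /forallP /(_ z) /negP + lt_pz lt_zq; apply; rewrite lt_pz lt_zq. Qed.

Lemma lt_asym p q : lt p q -> lt q p -> False.
Proof. by move=> lt_pq lt_qp; have := lt_trans lt_pq lt_qp; rewrite lt_irr. Qed.

Lemma covers_flip p q : hasse p q -> covers lt q p = ~~ covers lt p q.
Proof.
have excl x y : covers lt x y -> ~~ covers lt y x.
  by move=> /covers_lt lt_xy; apply/negP=> /covers_lt /(lt_asym lt_xy).
by case/orP=> cov; rewrite cov ?(negbTE (excl _ _ cov)) // excl.
Qed.

Lemma hasse_path2_covers2 a b c d : hasse a d -> hasse d c -> covers lt a b -> covers lt b c ->
  covers lt a d && covers lt d c.
Proof.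
move=> ad dc ab bc; have lt_ac := lt_trans (covers_lt ab) (covers_lt bc).
case/orP: ad => ad; case/orP: dc => dc; rewrite ?ad ?dc //=; exfalso.
- exact: covers_between ad lt_ac (covers_lt dc).
- exact: covers_between dc (covers_lt ad) lt_ac.
- exact: lt_asym lt_ac (lt_trans (covers_lt dc) (covers_lt ad)).
Qed.

Lemma hasse_square p1 p2 p3 p4 :
  hasse p1 p2 -> hasse p2 p3 -> hasse p1 p4 -> hasse p4 p3 ->
  covers lt p1 p2 + covers lt p2 p3 = covers lt p1 p4 + covers lt p4 p3.
Proof.
move=> h12 h23 h14 h43.
have up2 := @hasse_path2_covers2 p1 p2 p3 p4 h14 h43.
have up4 := @hasse_path2_covers2 p1 p4 p3 p2 h12 h23.
have [h21 h32 h41 h34] : [/\ hasse p2 p1, hasse p3 p2, hasse p4 p1 & hasse p3 p4].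
  by split; rewrite hasse_sym.
have down2 := @hasse_path2_covers2 p3 p2 p1 p4 h34 h41.
have down4 := @hasse_path2_covers2 p3 p4 p1 p2 h32 h21.
(* Up twice on one route forces up twice on the other, and likewise down twice;
   otherwise both routes have exactly one up-step. *)
move: up2 up4 down2 down4.
rewrite (covers_flip h12) (covers_flip h23) (covers_flip h14) (covers_flip h43).
by case: (covers lt p1 p2); case: (covers lt p2 p3); case: (covers lt p1 p4);
  case: (covers lt p4 p3) => //= A B C D;
  first [by move: (A isT isT) | by move: (B isT isT) | by move: (C isT isT) | by move: (D isT isT)].
Qed.

Definition hasse_walk N (f : nat -> V) := forall t, t < N -> hasse (f t) (f t.+1).

Definition ups N (f : nat -> V) := \sum_(0 <= t < N) covers lt (f t) (f t.+1).

Lemma eq_ups N f f' : (forall t, t <= N -> f t = f' t) -> ups N f = ups N f'.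
Proof. by move=> eq_ff'; apply: eq_big_nat => t /andP[_ lt_tN]; rewrite !eq_ff' // ltnW. Qed.

Lemma ups_rev N f : hasse_walk N f -> ups N f + ups N (fun t => f (N - t)) = N.
Proof.
move=> f_walk; rewrite /ups [X in _ + X]big_nat_rev -big_split /=.
rewrite -[RHS]subn0 -[RHS]muln1 -sum_nat_const_nat; apply: eq_big_nat => t /andP[_ lt_tN].
have -> : N - (0 + N - t.+1) = t.+1 by lia.
have -> : N - (0 + N - t.+1).+1 = t by lia.
by rewrite (covers_flip (f_walk _ lt_tN)); case: covers.
Qed.

Lemma ups_change_one N f f' k : 0 < k < N -> hasse_walk N f -> hasse_walk N f' ->
  (forall t, t != k -> f t = f' t) -> ups N f = ups N f'.
Proof.
move=> /andP[k_gt0 lt_kN] f_walk f'_walk eq_ff'.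
have split3 F : \sum_(0 <= t < N) F t =
    \sum_(0 <= t < k.-1) F t + (F k.-1 + F k) + \sum_(k.+1 <= t < N) F t.
  rewrite (@big_cat_nat _ _ _ k.-1) ?leq0n //=; last by lia.
  rewrite (@big_ltn _ _ _ k.-1); last by lia.
  by rewrite (prednK k_gt0) (big_ltn lt_kN) !addnA.
rewrite /ups !split3; congr (_ + _ + _).
- by apply: eq_big_nat => t /andP[_ lt_t]; rewrite !eq_ff'; lia.
- have eq_pred : f k.-1 = f' k.-1 by apply: eq_ff'; lia.
  have eq_succ : f k.+1 = f' k.+1 by apply: eq_ff'; lia.
  have lt_k1 : k.-1 < N by lia.
  have := f_walk _ lt_k1; have := f'_walk _ lt_k1; have := f'_walk _ lt_kN.
  rewrite (prednK k_gt0) -eq_pred -eq_succ => h1 h2 h3.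
  exact: hasse_square (f_walk _ lt_kN) h2 h1.
- by apply: eq_big_nat => t /andP[lt_t _]; rewrite !eq_ff'; lia.
Qed.

Lemma ups_local_change N f f' : hasse_walk N f -> hasse_walk N f' -> f 0 = f' 0 -> f N = f' N ->
  (forall t, f t != f' t -> f t.-1 = f' t.-1 /\ f t.+1 = f' t.+1) -> ups N f = ups N f'.
Proof.
move=> f_walk f'_walk eq0 eqN isolated.
pose g k t := if t < k then f' t else f t.
have g_walk k : hasse_walk N (g k).
  move=> t lt_tN; rewrite /g; case: (ltnP t.+1 k) => [lt_t1k | le_kt1].
    by rewrite (ltnW lt_t1k) f'_walk.
  case: (ltnP t k) => _; last exact: f_walk.
  have [<-|/isolated[_ ->]] := eqVneq (f t) (f' t); [exact: f_walk | exact: f'_walk].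
have g_step k : k < N -> ups N (g k) = ups N (g k.+1).
  move=> lt_kN; have g_off t : t != k -> g k t = g k.+1 t.
    by move=> ne_tk; rewrite /g ltnS [t <= k]leq_eqVlt (negbTE ne_tk).
  have [eq_k|ne_k] := eqVneq (f k) (f' k).
    by apply: eq_ups => t _; have [->|/g_off] := eqVneq t k; rewrite /g ?ltnn ?ltnSn.
  have k_gt0 : 0 < k by rewrite lt0n; apply: contra_neq ne_k => ->.
  by apply: (ups_change_one (k := k)); rewrite ?k_gt0.
have g_ups k : k <= N -> ups N f = ups N (g k).
  elim: k => [_|k IH lt_kN]; first by apply: eq_ups => t _; rewrite /g ltn0.
  by rewrite IH; [exact: g_step | exact: ltnW].
rewrite (g_ups N (leqnn N)); apply: eq_ups => t le_tN; rewrite /g ltn_neqAle le_tN andbT.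
by case: eqVneq => [->|].
Qed.

End CoverOrder.

(* The level at time [t]: [m] at [t = 1], down to [0] at [t = m + 1], [0] until
   [t = N - m - 1], and back up to [m] at [t = N - 1]. *)
Definition myc_level (m N t : nat) := (m - t.-1) + (t - (N - m.+1)).

Definition myc_walk (T : Type) (m N : nat) (x y : T) (t : nat) : option ('I_m.+1 * T) :=
  if (t == 0) || (t == N) then None else Some (inord (myc_level m N t), if odd t then x else y).

Section MycielskianWalk.
Variables (T : Type) (m N : nat).

Lemma myc_walk0 (x y : T) : myc_walk m N x y 0 = None.
Proof. by []. Qed.

Lemma myc_walkN (x y : T) : myc_walk m N x y N = None.
Proof. by rewrite /myc_walk eqxx orbT. Qed.

Lemma myc_walk_even (x y z : T) t : ~~ odd t -> myc_walk m N x y t = myc_walk m N z y t.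
Proof. by rewrite /myc_walk => /negbTE ->. Qed.

Lemma myc_walk_odd (x y z : T) t : odd t -> myc_walk m N x y t = myc_walk m N x z t.
Proof. by rewrite /myc_walk => ->. Qed.

Hypothesis N_large : m.*2 + 3 <= N.

Lemma myc_walk_rev (x y : T) t : odd N -> t <= N ->
  myc_walk m N x y (N - t) = myc_walk m N y x t.
Proof.
move=> odd_N le_tN; rewrite /myc_walk.
have [->|t_gt0] := eqVneq t 0; first by rewrite subn0 eqxx orbT.
have [->|t_ltN] := eqVneq t N; first by rewrite subnn.
have -> : (N - t == 0) || (N - t == N) = false by lia.
have -> : myc_level m N (N - t) = myc_level m N t by rewrite /myc_level; lia.
by rewrite oddB // odd_N; case: (odd t).
Qed.

End MycielskianWalk.

Lemma myc_walk_edge (T : finType) (e : rel T) m N x y t :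
  symmetric e -> e x y -> m.*2 + 3 <= N -> t < N ->
  mycielskian e m (myc_walk m N x y t) (myc_walk m N x y t.+1).
Proof.
move=> e_sym e_xy N_large lt_tN; rewrite /myc_walk.
have [->|t_gt0] := eqVneq t 0.
  have -> : (1 == 0) || (1 == N) = false by lia.
  by rewrite /= inordK /myc_level; lia.
have -> : (t == N) = false by lia.
have [t1_N|t1_ltN] := eqVneq t.+1 N.
  by rewrite orbT /= inordK /myc_level; lia.
rewrite orbF /= !inordK /myc_level; [|lia|lia].
apply/andP; split; first by case: (odd t); rewrite /= ?e_xy // e_sym.
lia.
Qed.

Section OddCycle.
Variables (T : finType) (e : rel T).
Hypothesis e_sym : symmetric e.

Definition parity_cover : rel (T * bool) := fun a b => e a.1 b.1 && (b.2 == ~~ a.2).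

Lemma parity_cover_sym : symmetric parity_cover.
Proof. by move=> [x b] [y b']; rewrite /parity_cover /= e_sym; case: b; case: b'. Qed.

Lemma path_parity_cover x p b :
  path e x p -> connect parity_cover (x, b) (last x p, b (+) odd (size p)).
Proof.
elim: p x b => [|y p IH] x b /=; first by rewrite addbF.
case/andP=> e_xy /(IH _ (~~ b)); rewrite addbN -addNb; apply: connect_trans.
by apply: connect1; rewrite /parity_cover /= e_xy eqxx.
Qed.

Lemma parity_cover_path s p : path parity_cover s p ->
  path e s.1 (map fst p) /\ (last s p).2 = s.2 (+) odd (size p).
Proof.
elim: p s => [|y p IH] s /=; first by rewrite addbF.
case/andP=> /andP[e_sy /eqP y2] /IH[-> ->].
by rewrite e_sy y2 addbN -addNb.
Qed.

Lemma bipartite_of_no_odd_cycle :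
  (forall x p, path e x p -> last x p = x -> ~~ odd (size p)) -> bipartite e.
Proof.
move=> no_odd_cycle.
have e_csym : connect_sym e by apply: sym_connect_sym.
have cover_csym : connect_sym parity_cover by apply: sym_connect_sym; apply: parity_cover_sym.
exists (fun x => connect parity_cover (root e x, false) (x, false)) => x y e_xy.
rewrite -[root e y](rootP e_csym (connect1 e_xy)); set r := root e x.
have reach z : root e z = r ->
    connect parity_cover (r, false) (z, false) || connect parity_cover (r, false) (z, true).
  move=> root_z; have : connect e r z by rewrite -root_z e_csym connect_root.
  case/connectP=> p e_p ->; have := path_parity_cover false e_p.
  by case: (odd (size p)) => ->; rewrite ?orbT.
have step b : connect parity_cover (r, false) (x, b) -> connect parity_cover (r, false) (y, ~~ b).
  by move/connect_trans; apply; apply: connect1; rewrite /parity_cover /= e_xy eqxx.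
apply/negP=> /eqP col_xy; case Cx: (connect parity_cover (r, false) (x, false)).
- have : connect parity_cover (y, false) (y, true).
    by apply: connect_trans (step _ Cx); rewrite cover_csym -col_xy.
  case/connectP=> p cover_p last_p; have [e_p parity_p] := parity_cover_path cover_p.
  have := no_odd_cycle _ _ e_p; rewrite size_map (last_map fst p (y, false)) -last_p.
  by move: parity_p; rewrite -last_p /= => <- /(_ erefl).
- have := reach x erefl; rewrite Cx /= => /step.
  by rewrite /= -col_xy Cx.
Qed.

(* [Phi x y] only changes when both ends of the edge [xy] move at once. *)
Definition pivot_invariant (A : Type) (Phi : T -> T -> A) :=
  (forall x y z, e x y -> e z y -> Phi x y = Phi z y) /\
  (forall x y z, e x y -> e x z -> Phi x y = Phi x z).

Lemma pivot_invariant_transpose A (Phi : T -> T -> A) :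
  pivot_invariant Phi -> pivot_invariant (fun x y => Phi y x).
Proof.
by case=> tail head; split=> x y z xy zy /=; [apply: head | apply: tail]; rewrite // e_sym.
Qed.

Lemma pivot_invariant_path A (Phi : T -> T -> A) a b p : pivot_invariant Phi -> path e a (b :: p) ->
  Phi a b = if odd (size p) then Phi (last b p) (last a (belast b p))
            else Phi (last a (belast b p)) (last b p).
Proof.
elim: p a b Phi => [|c p IH] a b Phi Phi_inv //= /and3P[e_ab e_bc c_p].
rewrite (Phi_inv.1 a b c e_ab); last by rewrite e_sym.
rewrite (IH b c _ (pivot_invariant_transpose Phi_inv)) /= ?e_bc //.
by case: (odd (size p)).
Qed.

Lemma pivot_invariant_odd_cycle A (Phi : T -> T -> A) x y p :
  pivot_invariant Phi -> path e x (y :: p) -> last y p = x -> ~~ odd (size p) ->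
  Phi x y = Phi y x.
Proof.
move=> Phi_inv x_p last_p even_p.
have e_last : e (last x (belast y p)) x.
  by move: x_p; rewrite lastI rcons_path last_p => /andP[].
rewrite (pivot_invariant_path Phi_inv x_p) (negbTE even_p) last_p.
by apply: Phi_inv.1 e_last _; rewrite e_sym; case/andP: x_p.
Qed.

Lemma not_bipartite_flip_edge : ~ bipartite e ->
  exists x y, e x y /\ forall A (Phi : T -> T -> A), pivot_invariant Phi -> Phi x y = Phi y x.
Proof.
move=> not_bip; apply: NNPP => no_flip; apply: not_bip; apply: bipartite_of_no_odd_cycle.
move=> x [//|y p] x_p last_p; apply/negP => odd_p; apply: no_flip; exists x, y.
split; first by case/andP: x_p.
by move=> A Phi Phi_inv; exact: pivot_invariant_odd_cycle Phi_inv x_p last_p odd_p.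
Qed.

End OddCycle.

Lemma pivot_invariant_ups_myc_walk (V : finType) (lt : rel V) (T : finType) (e : rel T) k N
    (F : nat -> option ('I_k.+1 * T) -> V) :
  irreflexive lt -> transitive lt ->
  (forall u v, e u v -> hasse_walk lt N (fun t => F t (myc_walk k N u v t))) ->
  pivot_invariant e (fun u v => ups lt N (fun t => F t (myc_walk k N u v t))).
Proof.
move=> lt_irr lt_trans F_walk.
split=> [u v z uv zv | u v w uv uw]; apply: (ups_local_change lt_irr lt_trans);
  rewrite ?myc_walkN //; try exact: F_walk.
- move=> t ne; have odd_t : odd t.
    by apply: contraNT ne => even_t; rewrite (myc_walk_even k N u v z even_t).
  case: t odd_t ne => // t /= even_t _.
  have even_t2 : ~~ odd t.+2 by rewrite /= negbK.
  by rewrite (myc_walk_even k N u v z even_t) (myc_walk_even k N u v z even_t2).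
- move=> t; case: (boolP (odd t)) => [odd_t | even_t].
    by rewrite (myc_walk_odd k N u v w odd_t) eqxx.
  case: t even_t => [|t]; first by rewrite !myc_walk0 eqxx.
  rewrite /= negbK => odd_t _; have odd_t2 : odd t.+2 by rewrite /= negbK.
  by rewrite (myc_walk_odd k N u v w odd_t) (myc_walk_odd k N u v w odd_t2).
Qed.

Lemma bipartite_of_mycielskian_prod_cover_graph (T U : finType) (g : rel T) (h : rel U) m n :
  symmetric g -> symmetric h ->
  is_cover_graph (direct_prod (mycielskian g m) (mycielskian h n)) -> bipartite g \/ bipartite h.
Proof.
move=> g_sym h_sym [lt [lt_irr [lt_trans adj_hasse]]].
apply: NNPP => /not_or_and[/(not_bipartite_flip_edge g_sym)[x [y [g_xy flip_g]]]].
move=> /(not_bipartite_flip_edge h_sym)[x' [y' [h_xy flip_h]]].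
pose N := m.*2 + n.*2 + 3.
pose W (u v : T) (u' v' : U) t := (myc_walk m N u v t, myc_walk n N u' v' t).
have W_walk u v u' v' : g u v -> h u' v' -> hasse_walk lt N (W u v u' v').
  move=> g_uv h_uv t lt_tN; rewrite /hasse -adj_hasse /direct_prod.
  by rewrite !myc_walk_edge // /N; lia.
have flip1 : ups lt N (W x y x' y') = ups lt N (W y x x' y').
  apply: (flip_g _ (fun u v => ups lt N (W u v x' y'))).
  apply: (pivot_invariant_ups_myc_walk (F := fun t o => (o, myc_walk n N x' y' t))) => //.
  by move=> u v /W_walk; apply.
have flip2 : ups lt N (W y x x' y') = ups lt N (W y x y' x').
  apply: (flip_h _ (fun u' v' => ups lt N (W y x u' v'))).
  apply: (pivot_invariant_ups_myc_walk (F := fun t o => (myc_walk m N y x t, o))) => // u v h_uv.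
  by apply: W_walk; rewrite // g_sym.
have rev : ups lt N (fun t => W x y x' y' (N - t)) = ups lt N (W y x y' x').
  by apply: eq_ups => t le_tN; rewrite /W !myc_walk_rev // /N ?oddD ?odd_double //; lia.
have := ups_rev lt_irr lt_trans (W_walk _ _ _ _ g_xy h_xy).
rewrite rev -flip2 -flip1 addnn => /(congr1 odd).
by rewrite odd_double /N !oddD !odd_double.
Qed.

Theorem theorem13 (T U : finType) (g : rel T) (h : rel U) (m n : nat) :
  symmetric g -> irreflexive g -> symmetric h -> irreflexive h ->
  0 < m -> 0 < n ->
  is_cover_graph (direct_prod (mycielskian g m) (mycielskian h n)) <->
  (bipartite g \/ bipartite h).
Proof.
move=> g_sym _ h_sym _ m_gt0 n_gt0; split.
- exact: bipartite_of_mycielskian_prod_cover_graph.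
- exact: mycielskian_prod_cover_graph.
Qed.
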